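(* Let $\overline{H}_n = \sum_{j=1}^n \frac{(-1)^{j-1}}{j}$ denote the $n$th skew-harmonic number and let $\operatorname{Ein}(z) = \int_0^z \frac{1 - e^{-t}}{t}\,dt$ denote the complementary exponential integral. For all real $y$, $$\sum_{n = 1}^\infty \overline{H}_n\left(e^y - 1 - \frac{y}{1!} - \frac{y^2}{2!} - \ldots - \frac{y^n}{n!}\right) = y e^y\left[\operatorname{Ein}(2y) - \operatorname{Ein}(y)\right] - \cosh (y) +1.$$ *)

From Stdlib Require Import Reals.
From Coquelicot Require Import Coquelicot.
Open Scope R_scope.

Fixpoint skew_harmonic (n : nat) : R :=
  match n with
  | O => 0
  | S m => skew_harmonic m + (-1) ^ m / INR (S m)
  end.

(* integrand (1 - e^{-t})/t, with its removable-singularity value 1 at t = 0 *)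
Definition ein_integrand (t : R) : R :=
  if Req_EM_T t 0 then 1 else (1 - exp (- t)) / t.

Definition Ein (z : R) : R := RInt ein_integrand 0 z.

Definition exp_tail (y : R) (n : nat) : R :=
  exp y - sum_f_R0 (fun k => y ^ k / INR (Factorial.fact k)) n.

From Stdlib Require Import Reals Lra Lia.
From Coquelicot Require Import Coquelicot.
Open Scope R_scope.

(* Put c_k = Hbar_0 + ... + Hbar_(k-1). Since e^y - sum_(k<=n) y^k/k! = sum_(k>n) y^k/k!,
   Abel summation turns the series into G(y) = sum_k c_k y^k/k!; the boundary term
   c_(N+2) tail_y(N+1) vanishes because |c_k| <= 2^k and 2^(n+1) |tail_y(n)| <= tail_(2|y|)(n).
   As c_(k+1) - c_k = Hbar_k, we get G' = G + A with A(y) = sum_k Hbar_k y^k/k!, and likewise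
   A' = A + Ein', where Ein'(t) = (1 - e^-t)/t.  From 2 Ein'(2y) - Ein'(y) = e^-y Ein'(y) one
   checks that e^y (Ein(2y) - Ein(y)) solves the equation for A and that the right-hand side of
   the theorem solves the one for G; all these functions vanish at 0, so they coincide. *)

Lemma CV_radius_infinite_le (a b : nat -> R) :
  (forall n, Rabs (a n) <= Rabs (b n)) -> CV_radius b = p_infty -> CV_radius a = p_infty.
Proof.
  intros Hab Hb.
  assert (Hle : Rbar_le (CV_radius b) (CV_radius a)).
  { apply (is_lub_Rbar_subset
      (fun r => exists M, forall n, Rabs (a n * r ^ n) <= M)
      (fun r => exists M, forall n, Rabs (b n * r ^ n) <= M));
      [| apply CV_radius_bounded | apply CV_radius_bounded].
    intros r [M HM]; exists M; intros n; eapply Rle_trans, HM.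
    rewrite !Rabs_mult; apply Rmult_le_compat_r; [apply Rabs_pos | apply Hab]. }
  rewrite Hb in Hle; destruct (CV_radius a); simpl in Hle; tauto.
Qed.

Lemma CV_radius_pow_div_fact (M : R) :
  0 < M -> CV_radius (fun n => M ^ n / INR (Factorial.fact n)) = p_infty.
Proof.
  intros HM; apply CV_radius_infinite_DAlembert.
  - intros n; apply Rgt_not_eq, Rdiv_lt_0_compat; [apply pow_lt; lra | apply INR_fact_lt_0].
  - apply is_lim_seq_ext with (fun n => M / INR (S n)).
    + intros n; assert (HS : 0 < INR (S n)) by (apply lt_0_INR; lia).
      replace (M ^ S n / _ / _) with (M / INR (S n)).
      * symmetry; apply Rabs_pos_eq, Rlt_le, Rdiv_lt_0_compat; lra.
      * assert (Hf := INR_fact_lt_0 n); assert (Hp : 0 < M ^ n) by (apply pow_lt; lra).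
        rewrite fact_simpl, mult_INR; simpl pow; field; lra.
    + replace (Finite 0) with (Rbar_mult M (Rbar_inv p_infty)) by (simpl; f_equal; ring).
      apply is_lim_seq_scal_l, is_lim_seq_inv; [| discriminate].
      apply (is_lim_seq_incr_1 INR), is_lim_seq_INR.
Qed.

Definition egf (a : nat -> R) (k : nat) : R := a k / INR (Factorial.fact k).

Lemma CV_radius_egf (M : R) (a : nat -> R) :
  0 < M -> (forall n, Rabs (a n) <= M ^ n) -> CV_radius (egf a) = p_infty.
Proof.
  intros HM Ha; apply (CV_radius_infinite_le _ (fun n => M ^ n / INR (Factorial.fact n)));
    [intros n | exact (CV_radius_pow_div_fact M HM)].
  unfold egf, Rdiv; assert (Hf := Rinv_0_lt_compat _ (INR_fact_lt_0 n)).
  rewrite !Rabs_mult, (Rabs_pos_eq (/ _)), (Rabs_pos_eq (M ^ n)) by (apply pow_le || idtac; lra).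
  apply Rmult_le_compat_r; [lra | apply Ha].
Qed.

Lemma egf_derive_coef (a : nat -> R) n :
  INR (S n) * egf a (S n) = egf a n + egf (fun k => a (S k) - a k) n.
Proof.
  unfold egf; rewrite fact_simpl, mult_INR.
  assert (Hf := INR_fact_lt_0 n); assert (HS : 0 < INR (S n)) by (apply lt_0_INR; lia).
  field; lra.
Qed.

Lemma Rbar_lt_Rabs_p_infty (a : nat -> R) (x : R) :
  CV_radius a = p_infty -> Rbar_lt (Rabs x) (CV_radius a).
Proof. intros ->; exact I. Qed.

Lemma is_derive_PSeries_shift (a b : nat -> R) (x : R) :
  CV_radius a = p_infty -> CV_radius b = p_infty ->
  (forall n, INR (S n) * a (S n) = a n + b n) ->
  is_derive (PSeries a) x (PSeries a x + PSeries b x).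
Proof.
  intros Ha Hb Hab.
  rewrite <- PSeries_plus by (apply CV_radius_inside, Rbar_lt_Rabs_p_infty; assumption).
  rewrite <- (PSeries_ext (PS_derive a)) by exact Hab.
  apply is_derive_PSeries, Rbar_lt_Rabs_p_infty; assumption.
Qed.

Lemma is_lim_seq_PSeries (a : nat -> R) (x : R) :
  Rbar_lt (Rabs x) (CV_radius a) ->
  is_lim_seq (fun N => sum_f_R0 (fun k => a k * x ^ k) N) (PSeries a x).
Proof.
  intros Hx; assert (Hs := PSeries_correct _ _ (CV_radius_inside a x Hx)).
  eapply is_lim_seq_ext; [| exact Hs]; intros N; simpl.
  rewrite sum_n_Reals; apply sum_eq; intros i _.
  rewrite pow_n_pow; apply Rmult_comm.
Qed.

Lemma is_series_exp (x : R) : is_series (fun k => x ^ k / INR (Factorial.fact k)) (exp x).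
Proof. eapply is_series_ext, is_exp_Reals; intros k; now rewrite pow_n_pow. Qed.

Lemma is_series_of_lim_sum (a : nat -> R) (l : R) :
  is_lim_seq (sum_f_R0 a) l -> is_series a l.
Proof.
  intros H; apply (is_lim_seq_ext _ (sum_n a)) in H; [exact H |].
  intros n; symmetry; apply sum_n_Reals.
Qed.

Lemma is_derive_eq (f : R -> R) (x l l' : R) : is_derive f x l -> l = l' -> is_derive f x l'.
Proof. now intros H <-. Qed.

Lemma linear_ode_unique (f F g : R -> R) :
  (forall x, is_derive f x (f x + g x)) -> (forall x, is_derive F x (F x + g x)) ->
  f 0 = F 0 -> forall x, f x = F x.
Proof.
  intros Hf HF H0 x.
  set (h := fun t => exp (- t) * (f t - F t)).
  assert (Hh : forall t, is_derive h t 0).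
  { intros t; eapply is_derive_eq.
    - apply (is_derive_mult (fun t => exp (- t)) (fun t => f t - F t)).
      + auto_derive; [exact I | reflexivity].
      + apply (is_derive_minus f F); [apply Hf | apply HF].
      + intros; apply Rmult_comm.
    - unfold minus, plus, opp, mult; simpl; ring. }
  assert (Hconst : h x = h 0).
  { destruct (Rtotal_order x 0) as [Hlt | [-> | Hgt]]; [| reflexivity |].
    - apply eq_is_derive; [intros t _; apply Hh | exact Hlt].
    - symmetry; apply eq_is_derive; [intros t _; apply Hh | exact Hgt]. }
  unfold h in Hconst; rewrite H0, Rminus_diag, Rmult_0_r in Hconst.
  assert (Hpos := exp_pos (- x)).
  apply Rmult_integral in Hconst as [Hexp0 | Hdiff]; lra.
Qed.

Lemma Rabs_alternating_inv_le_1 (n : nat) : Rabs ((-1) ^ n / INR (S n)) <= 1.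
Proof.
  assert (HS : 1 <= INR (S n)) by (apply (le_INR 1); lia).
  unfold Rdiv; rewrite Rabs_mult, pow_1_abs, Rabs_inv, Rabs_pos_eq by lra.
  rewrite Rmult_1_l, <- Rinv_1; apply Rinv_le_contravar; lra.
Qed.

Definition ein_coef : nat -> R := egf (fun k => (-1) ^ k / INR (S k)).

Lemma CV_radius_ein_coef : CV_radius ein_coef = p_infty.
Proof.
  apply (CV_radius_egf 1); [lra | intros n].
  rewrite pow1; apply Rabs_alternating_inv_le_1.
Qed.

Lemma is_pseries_ein_coef (t : R) : is_pseries (PS_incr_1 ein_coef) t (1 - exp (- t)).
Proof.
  assert (Hexp := is_series_exp (- t)).
  assert (Hshift : is_series (fun k => (- t) ^ S k / INR (Factorial.fact (S k))) (exp (- t) - 1)).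
  { apply (is_series_incr_1 (fun k => (- t) ^ k / INR (Factorial.fact k))); unfold plus; simpl.
    replace (exp (- t) - 1 + 1 / 1) with (exp (- t)) by field; exact Hexp. }
  apply is_series_decr_1.
  replace (plus (1 - exp (- t)) _) with (opp (exp (- t) - 1)) by (cbn; ring).
  eapply is_series_ext; [| apply (is_series_opp _ _ Hshift)].
  intros k; rewrite pow_n_pow; unfold ein_coef, egf, scal, opp, mult; cbn -[INR Factorial.fact pow].
  replace (- t) with (-1 * t) by ring.
  rewrite fact_simpl, mult_INR, Rpow_mult_distr, <- (tech_pow_Rmult (-1)).
  assert (Hf := INR_fact_lt_0 k); assert (HS : 0 < INR (S k)) by (apply lt_0_INR; lia).
  field; lra.
Qed.

Lemma ein_integrand_PSeries (t : R) : ein_integrand t = PSeries ein_coef t.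
Proof.
  unfold ein_integrand; destruct (Req_EM_T t 0) as [-> | Ht].
  - rewrite PSeries_0; unfold ein_coef, egf; simpl; field.
  - apply Rmult_eq_reg_l with t; [| exact Ht].
    rewrite <- PSeries_incr_1, (is_pseries_unique _ _ _ (is_pseries_ein_coef t)).
    field; exact Ht.
Qed.

Lemma ein_integrand_mul (t : R) : t * ein_integrand t = 1 - exp (- t).
Proof.
  unfold ein_integrand; destruct (Req_EM_T t 0) as [-> | Ht].
  - rewrite Ropp_0, exp_0; ring.
  - field; exact Ht.
Qed.

Lemma ein_integrand_double (y : R) :
  2 * ein_integrand (2 * y) - ein_integrand y = exp (- y) * ein_integrand y.
Proof.
  unfold ein_integrand; destruct (Req_EM_T y 0) as [-> | Hy].
  - rewrite Rmult_0_r; destruct (Req_EM_T 0 0); [| contradiction]; rewrite Ropp_0, exp_0; ring.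
  - destruct (Req_EM_T (2 * y) 0) as [H2 | _]; [lra |].
    replace (- (2 * y)) with (- y + - y) by ring; rewrite exp_plus.
    field; exact Hy.
Qed.

Lemma is_derive_Ein (x : R) : is_derive Ein x (ein_integrand x).
Proof.
  assert (Hrad : CV_radius (PS_Int ein_coef) = p_infty)
    by (rewrite CV_radius_Int; exact CV_radius_ein_coef).
  apply (is_derive_ext (PSeries (PS_Int ein_coef))).
  - intros z; unfold Ein.
    rewrite <- RInt_PSeries by (apply Rbar_lt_Rabs_p_infty, CV_radius_ein_coef).
    apply RInt_ext; intros u _; symmetry; apply ein_integrand_PSeries.
  - rewrite ein_integrand_PSeries, <- (PSeries_ext (PS_derive (PS_Int ein_coef))).
    + apply is_derive_PSeries, Rbar_lt_Rabs_p_infty, Hrad.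
    + intros n; unfold PS_derive, PS_Int; field; apply not_0_INR; lia.
Qed.

Lemma is_derive_Ein_gap (y : R) :
  is_derive (fun y => Ein (2 * y) - Ein y) y (exp (- y) * ein_integrand y).
Proof.
  rewrite <- ein_integrand_double.
  apply (is_derive_minus (fun y => Ein (2 * y)) Ein); [| apply is_derive_Ein].
  replace (2 * ein_integrand (2 * y)) with (scal 2 (ein_integrand (2 * y))) by reflexivity.
  apply (is_derive_comp Ein (fun y => 2 * y)); [apply is_derive_Ein |].
  auto_derive; [exact I | ring].
Qed.

Fixpoint cum_skew_harmonic (k : nat) : R :=
  match k with
  | O => 0
  | S m => cum_skew_harmonic m + skew_harmonic m
  end.

Lemma Rabs_skew_harmonic_le (n : nat) : Rabs (skew_harmonic n) <= 2 ^ n - 1.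
Proof.
  induction n as [| n IH]; cbn [skew_harmonic].
  - rewrite Rabs_R0; simpl; lra.
  - assert (Hterm := Rabs_alternating_inv_le_1 n).
    assert (Hpow : 1 <= 2 ^ n) by (apply pow_R1_Rle; lra).
    change (2 ^ S n) with (2 * 2 ^ n); eapply Rle_trans; [apply Rabs_triang | lra].
Qed.

Lemma Rabs_cum_skew_harmonic_le (n : nat) : Rabs (cum_skew_harmonic n) <= 2 ^ n.
Proof.
  induction n as [| n IH]; cbn [cum_skew_harmonic].
  - rewrite Rabs_R0; simpl; lra.
  - eapply Rle_trans; [apply Rabs_triang |].
    change (2 ^ S n) with (2 * 2 ^ n); generalize (Rabs_skew_harmonic_le n); lra.
Qed.

Lemma CV_radius_egf_skew_harmonic : CV_radius (egf skew_harmonic) = p_infty.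
Proof.
  apply (CV_radius_egf 2); [lra | intros n].
  generalize (Rabs_skew_harmonic_le n); lra.
Qed.

Lemma CV_radius_egf_cum_skew_harmonic : CV_radius (egf cum_skew_harmonic) = p_infty.
Proof. apply (CV_radius_egf 2); [lra | exact Rabs_cum_skew_harmonic_le]. Qed.

Lemma egf_skew_harmonic_closed (y : R) :
  PSeries (egf skew_harmonic) y = exp y * (Ein (2 * y) - Ein y).
Proof.
  apply (linear_ode_unique _ (fun y => exp y * (Ein (2 * y) - Ein y)) ein_integrand).
  - intros x; rewrite ein_integrand_PSeries.
    apply is_derive_PSeries_shift; [exact CV_radius_egf_skew_harmonic | exact CV_radius_ein_coef |].
    intros n; rewrite egf_derive_coef; f_equal.
    unfold ein_coef, egf; cbn [skew_harmonic]; f_equal; ring.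
  - intros x; eapply is_derive_eq.
    + apply (is_derive_mult exp (fun y => Ein (2 * y) - Ein y));
        [apply is_derive_exp | apply is_derive_Ein_gap | intros; apply Rmult_comm].
    + unfold plus, mult; simpl.
      rewrite <- Rmult_assoc, <- exp_plus, Rplus_opp_r, exp_0; ring.
  - rewrite PSeries_0, Rmult_0_r, Rminus_diag; unfold egf; simpl; field.
Qed.

Lemma egf_cum_skew_harmonic_closed (y : R) :
  PSeries (egf cum_skew_harmonic) y = y * exp y * (Ein (2 * y) - Ein y) - cosh y + 1.
Proof.
  apply (linear_ode_unique _ (fun y => y * exp y * (Ein (2 * y) - Ein y) - cosh y + 1)
           (PSeries (egf skew_harmonic))).
  - intros x; apply is_derive_PSeries_shift;
      [exact CV_radius_egf_cum_skew_harmonic | exact CV_radius_egf_skew_harmonic |].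
    intros n; rewrite egf_derive_coef; f_equal; unfold egf; cbn [cum_skew_harmonic]; f_equal; ring.
  - intros t; rewrite egf_skew_harmonic_closed; eapply is_derive_eq.
    + apply (is_derive_plus (fun y => y * exp y * (Ein (2 * y) - Ein y) - cosh y)).
      apply (is_derive_minus (fun y => y * exp y * (Ein (2 * y) - Ein y))).
      * apply (is_derive_mult (fun y => y * exp y));
        [| apply is_derive_Ein_gap | intros; apply Rmult_comm].
        auto_derive; [exact I | reflexivity].
      * auto_derive; [exact I | reflexivity].
      * auto_derive; [exact I | reflexivity].
    + unfold minus, plus, opp, mult, one, zero; simpl.
      assert (Hexp : exp t * exp (- t) = 1) by (rewrite <- exp_plus, Rplus_opp_r; apply exp_0).
      assert (Hcosh : cosh t - sinh t = exp (- t)) by (unfold cosh, sinh; field).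
      replace (t * exp t * (exp (- t) * ein_integrand t))
        with (exp t * exp (- t) * (t * ein_integrand t)) by ring.
      rewrite Hexp, ein_integrand_mul; lra.
  - rewrite PSeries_0, Rmult_0_l, Rmult_0_l, cosh_0; unfold egf; simpl; field.
Qed.

Lemma exp_tail_S (y : R) (n : nat) :
  exp_tail y (S n) = exp_tail y n - y ^ S n / INR (Factorial.fact (S n)).
Proof. unfold exp_tail; rewrite tech5; ring. Qed.

Lemma is_series_exp_tail (y : R) (n : nat) :
  is_series (fun k => y ^ (S n + k) / INR (Factorial.fact (S n + k))) (exp_tail y n).
Proof.
  apply (is_series_incr_n (fun k => y ^ k / INR (Factorial.fact k))); [lia |].
  replace (plus (exp_tail y n) _) with (exp y); [apply is_series_exp |].
  unfold exp_tail, plus; simpl; rewrite sum_n_Reals; ring.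
Qed.

Lemma exp_tail_scale_le (M y : R) (n : nat) :
  1 <= M -> M ^ S n * Rabs (exp_tail y n) <= exp_tail (M * Rabs y) n.
Proof.
  intros HM.
  set (u := fun k => y ^ (S n + k) / INR (Factorial.fact (S n + k))).
  set (v := fun k => (M * Rabs y) ^ (S n + k) / INR (Factorial.fact (S n + k))).
  assert (Huv : forall k, Rabs (M ^ S n * u k) <= v k).
  { intros k; unfold u, v, Rdiv.
    assert (Hf := Rinv_0_lt_compat _ (INR_fact_lt_0 (S n + k))).
    rewrite !Rabs_mult, (Rabs_pos_eq (/ _)), (Rabs_pos_eq (M ^ S n)), <- RPow_abs, Rpow_mult_distr
      by (apply pow_le || idtac; lra).
    rewrite <- Rmult_assoc; apply Rmult_le_compat_r; [lra |].
    apply Rmult_le_compat_r; [apply pow_le, Rabs_pos |].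
    apply Rle_pow; [lra | lia]. }
  assert (Hv : ex_series v) by (eexists; apply is_series_exp_tail).
  assert (Habs : ex_series (fun k => Rabs (M ^ S n * u k))).
  { apply (@ex_series_le R_AbsRing R_CompleteNormedModule _ v); [| exact Hv].
    intros k; apply Rle_trans with (2 := Huv k); right; apply Rabs_Rabsolu. }
  rewrite <- (is_series_unique _ _ (is_series_exp_tail y n)),
          <- (is_series_unique _ _ (is_series_exp_tail (M * Rabs y) n)).
  fold u v.
  rewrite <- (Rabs_pos_eq (M ^ S n)) at 1 by (apply pow_le; lra).
  rewrite <- Rabs_mult, <- Series_scal_l.
  eapply Rle_trans; [apply Series_Rabs, Habs |].
  apply Series_le; [| exact Hv]; intros k; split; [apply Rabs_pos | apply Huv].
Qed.

Lemma is_lim_seq_exp_tail (y : R) : is_lim_seq (exp_tail y) 0.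
Proof.
  replace 0 with (exp y - exp y) by ring.
  apply is_lim_seq_minus'; [apply is_lim_seq_const |].
  eapply is_lim_seq_ext; [| apply (is_series_exp y)].
  intros n; simpl; apply sum_n_Reals.
Qed.

Lemma sum_skew_harmonic_exp_tail (y : R) (N : nat) :
  sum_f_R0 (fun m => skew_harmonic (S m) * exp_tail y (S m)) N =
  cum_skew_harmonic (S (S N)) * exp_tail y (S N)
  + sum_f_R0 (fun k => egf cum_skew_harmonic k * y ^ k) (S N).
Proof.
  induction N as [| N IH].
  - unfold egf; simpl; field.
  - rewrite tech5, IH, (tech5 _ (S N)), (exp_tail_S y (S N)).
    change (cum_skew_harmonic (S (S (S N))))
      with (cum_skew_harmonic (S (S N)) + skew_harmonic (S (S N))).
    unfold egf, Rdiv; ring.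
Qed.

Lemma is_lim_seq_cum_skew_harmonic_exp_tail (y : R) :
  is_lim_seq (fun N => cum_skew_harmonic (S (S N)) * exp_tail y (S N)) 0.
Proof.
  apply is_lim_seq_abs_0, is_lim_seq_le_le with (fun _ => 0) (fun N => exp_tail (2 * Rabs y) (S N)).
  - intros N; split; [apply Rabs_pos |].
    rewrite Rabs_mult; eapply Rle_trans; [| apply exp_tail_scale_le; lra].
    apply Rmult_le_compat_r; [apply Rabs_pos | apply Rabs_cum_skew_harmonic_le].
  - apply is_lim_seq_const.
  - apply (is_lim_seq_incr_1 (exp_tail (2 * Rabs y))), is_lim_seq_exp_tail.
Qed.

Theorem mainTheorem8 (y : R) :
  is_series (fun m : nat => skew_harmonic (S m) * exp_tail y (S m))
    (y * exp y * (Ein (2 * y) - Ein y) - cosh y + 1).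
Proof.
  rewrite <- egf_cum_skew_harmonic_closed, <- (Rplus_0_l (PSeries _ y)).
  assert (Hegf := is_lim_seq_PSeries _ y
                   (Rbar_lt_Rabs_p_infty _ y CV_radius_egf_cum_skew_harmonic)).
  apply is_lim_seq_incr_1 in Hegf.
  apply is_series_of_lim_sum; eapply is_lim_seq_ext;
    [| exact (is_lim_seq_plus' _ _ _ _ (is_lim_seq_cum_skew_harmonic_exp_tail y) Hegf)].
  intros N; symmetry; apply sum_skew_harmonic_exp_tail.
Qed.
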